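(* Consider the symmetric first-price sealed-bid auction with $n=2$ bidders and uniform prior $F=\mathrm{Id}$ on $[0,1]$, and let $0<\delta\le\frac15$. Then the function $\beta^*(x)=\frac{x}{2}$ (the unique symmetric BNE) does not satisfy the symmetric MVI: there exist $\beta,\tilde\beta\in\mathcal{B}_\delta$ with $DU(\beta,\tilde\beta)[\beta-\beta^*]>0$. Moreover, the condition fails locally: for every open neighborhood $N$ of $\beta^*$ in $V$, there exist $\beta,\tilde\beta\in N\cap\mathcal{B}_\delta$ with $DU(\beta,\tilde\beta)[\beta-\beta^*]>0$.
   Context: $V:=W^{1,1}(0,1)$. For $\delta>0$, $\mathcal{B}_\delta:=\{\beta\in V:0\le\beta\le1\text{ a.e.},\ \delta\le\beta'\text{ a.e.},\ \beta(0)=0\}$. Two bidders with values i.i.d. uniform on $[0,1]$. First-price ex-ante utility of bidder 1 bidding by $\beta$ against the other bidding by $\tilde\beta$: $U(\beta,\tilde\beta)=\int_0^1(x-\beta(x))\int_0^1\chi_{\{\beta(x)>\tilde\beta(y)\}}\,\mathrm{d}y\,\mathrm{d}x$. $DU(\beta,\tilde\beta)[d]:=\lim_{\varepsilon\to0}\varepsilon^{-1}(U(\beta+\varepsilon d,\tilde\beta)-U(\beta,\tilde\beta))$ for $d\in V$. $\beta^*$ solves the symmetric MVI if $DU(\beta,\tilde\beta)[\beta-\beta^*]\le0$ for all $\beta,\tilde\beta\in\mathcal{B}_\delta$. *)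

From HB Require Import structures.
From mathcomp Require Import all_boot all_order all_algebra.
From mathcomp Require Import all_classical all_reals all_analysis.
Set Implicit Arguments. Unset Strict Implicit. Unset Printing Implicit Defensive.
Import Order.TTheory GRing.Theory Num.Theory.
Import numFieldNormedType.Exports.
Local Open Scope classical_set_scope.
Local Open Scope ring_scope.

Section Auction.
Variable R : realType.
Local Notation mu := (@lebesgue_measure R).

Definition betastar : R -> R := fun x => x / 2.

(** [g] is the (weak) derivative of [b] on (0,1): [g] is Lebesgue integrable
    on (0,1) and [b] is its absolutely continuous primitive on [0,1].
    (Elements of W^{1,1}(0,1) are identified with their absolutely continuous
    representative.) *)
Definition weak_deriv01 (b g : R -> R) : Prop :=
  mu.-integrable `]0, 1[ (EFin \o g) /\
  forall x, 0 <= x <= 1 -> b x = b 0 + Rintegral mu `]0, x[ g.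

Definition inV (b : R -> R) : Prop := exists g, weak_deriv01 b g.

Definition Bdelta (delta : R) (b : R -> R) : Prop :=
  exists g, weak_deriv01 b g /\
    {ae mu, forall x, x \in `]0, 1[ -> 0 <= b x <= 1} /\
    {ae mu, forall x, x \in `]0, 1[ -> delta <= g x} /\
    b 0 = 0.

Definition Vball (c : R -> R) (eps : R) (b : R -> R) : Prop :=
  exists gb gc, weak_deriv01 b gb /\ weak_deriv01 c gc /\
    Rintegral mu `]0, 1[ (fun x => `|b x - c x|) +
    Rintegral mu `]0, 1[ (fun x => `|gb x - gc x|) < eps.

Definition U (b tb : R -> R) : R :=
  Rintegral mu `]0, 1[ (fun x =>
    (x - b x) * Rintegral mu `]0, 1[ (fun y => \1_[set y' | tb y' < b x] y)).

Definition DU_is (b tb d : R -> R) (L : R) : Prop :=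
  (fun eps : R => (U (fun x => b x + eps * d x) tb - U b tb) / eps)
    @ (0 : R)^' --> L.

Definition DU_pos (b tb d : R -> R) : Prop :=
  exists L, 0 < L /\ DU_is b tb d L.

End Auction.

From HB Require Import structures.
From mathcomp Require Import all_boot all_order all_algebra.
From mathcomp Require Import all_classical all_reals all_analysis.
From mathcomp Require Import lra measurable_realfun.
Import Order.TTheory GRing.Theory Num.Theory.
Import numFieldNormedType.Exports.
Set Implicit Arguments. Unset Strict Implicit. Unset Printing Implicit Defensive.
Local Open Scope classical_set_scope.
Local Open Scope ring_scope.

(* With c := 1/2 - delta, the bids kink c a x = x/2 - c (x - a)^+ have slope 1/2 or
   delta, so they lie in B_delta, and they are W^{1,1}-close to beta* when a is close
   to 1.  Let bidder 1 bid kink c (1 - k/2) against the rival bid kink c (1 - k).  The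
   direction beta - beta* = -c (x - 1 + k/2)^+ vanishes below 1 - k/2; above it the
   perturbed bid still beats the rival's highest bid 1/2 - c k for every step e < 1,
   because c > 1/4 (only delta < 1/4 is used).  So the winning probability is 1
   wherever the bid moves, U is affine in e near 0, and the directional derivative is
   c * int_0^1 (x - 1 + k/2)^+ dx > 0. *)

Section interval_integrals.
Variable R : realType.
Local Notation mu := (@lebesgue_measure R).

Lemma lebesgue_measure_itv0 (x : R) : 0 <= x -> mu `]0, x[%classic = x%:E.
Proof.
move=> x_ge0; rewrite lebesgue_measure_itv /= lte_fin.
have [x_gt0|] := ltP 0 x; first by rewrite -EFinD subr0.
by move=> x_le0; rewrite (@le_anti _ _ x 0) ?x_le0.
Qed.

Lemma Rintegral_cst_itv0 (x r : R) : 0 <= x ->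
  Rintegral mu `]0, x[ (fun _ => r) = r * x.
Proof.
move=> x_ge0; rewrite Rintegral_cst // -[in RHS](_ : fine x%:E = x) //.
by congr (_ * fine _); exact: lebesgue_measure_itv0.
Qed.

Lemma bounded_integrable_itv0 (x M : R) (f : R -> R) :
  measurable_fun `]0, x[ f -> (forall t, 0 < t < x -> `|f t| <= M) ->
  mu.-integrable `]0, x[ (EFin \o f).
Proof.
have mu_fin : (mu (`]0%R, x[%classic : set R) < +oo)%E.
  by rewrite lebesgue_measure_itv /=; case: ifP => _; rewrite ?ltry.
move=> mf f_le; apply: measurable_bounded_integrable => //.
have f_bounded : \forall N \near +oo, forall t, `]0, x[%classic t -> `|f t| <= N.
  near=> N => t; rewrite /= in_itv /= => /f_le /le_trans; apply.
  by near: N; apply: nbhs_pinfty_ge; exact: num_real.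
exact: f_bounded.
Unshelve. all: by end_near.
Qed.

Lemma integrable_cst_itv0 (x r : R) : mu.-integrable `]0, x[ (EFin \o fun=> r).
Proof.
apply: (bounded_integrable_itv0 (M := `|r|)) => //; exact: measurable_cst.
Qed.

End interval_integrals.

Section heaviside_ramp.
Variable R : realType.
Local Notation mu := (@lebesgue_measure R).

Definition heaviside (a : R) : R -> R := \1_[set t | a <= t].

Definition ramp (a x : R) : R := Num.max (x - a) 0.

Lemma heaviside_ge (a x : R) : a <= x -> heaviside a x = 1.
Proof. by move=> ax; rewrite /heaviside indicE mem_set. Qed.

Lemma heaviside_lt (a x : R) : x < a -> heaviside a x = 0.
Proof. by move=> xa; rewrite /heaviside indicE memNset //= leNgt xa. Qed.

Lemma heaviside01 (a x : R) : 0 <= heaviside a x <= 1.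
Proof.
have [ax|xa] := leP a x; first by rewrite heaviside_ge // ler01 lexx.
by rewrite heaviside_lt // lexx ler01.
Qed.

Lemma heaviside_nd (a : R) : nondecreasing_fun (heaviside a).
Proof.
move=> x y xy; have [ax|xa] := leP a x.
  by rewrite !heaviside_ge // (le_trans ax).
by rewrite heaviside_lt //; case/andP: (heaviside01 a y).
Qed.

Lemma integrable_heaviside (a x : R) :
  mu.-integrable `]0, x[ (EFin \o heaviside a).
Proof.
apply: (bounded_integrable_itv0 (M := 1)).
  exact: nondecreasing_measurable (heaviside_nd a).
by move=> t _; case/andP: (heaviside01 a t) => h0 h1; rewrite ger0_norm.
Qed.

Lemma Rintegral_heaviside (a x : R) : 0 < a ->
  Rintegral mu `]0, x[ (heaviside a) = ramp a x.
Proof.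
move=> a_gt0; rewrite /Rintegral /heaviside.
have -> : [set t | a <= t] = `[a, +oo[%classic.
  by apply/seteqP; split => t /=; rewrite in_itv /= andbT.
rewrite integral_indic //.
have -> : `[a, +oo[%classic `&` `]0, x[%classic = `[a, x[%classic.
  apply/seteqP; split => t /=; rewrite !in_itv /= andbT.
    by move=> [a_le /andP[_ tx]]; rewrite a_le tx.
  by case/andP => a_le tx; rewrite a_le (lt_le_trans a_gt0 a_le).
rewrite -[X in fine X]/(mu `[a, x[%classic) lebesgue_measure_itv /= lte_fin /ramp.
have [ax|xa] := ltP a x; first by rewrite -EFinD; apply/esym/max_idPl; lra.
by apply/esym/max_idPr; lra.
Qed.

Lemma rampE (a x : R) : ramp a x = if a <= x then x - a else 0.
Proof.
rewrite /ramp; case: leP => [ax|xa]; first by apply/max_idPl; rewrite subr_ge0.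
by apply/max_idPr; rewrite subr_le0 ltW.
Qed.

Lemma ramp_ge0 (a x : R) : 0 <= ramp a x.
Proof. by rewrite /ramp le_max lexx orbT. Qed.

Lemma ramp_le (a x : R) : x <= 1 -> a <= 1 -> ramp a x <= 1 - a.
Proof. by move=> x_le1 a_le1; rewrite /ramp ge_max lerD2r x_le1 subr_ge0. Qed.

Lemma ramp_nd (a : R) : nondecreasing_fun (ramp a).
Proof. by move=> x y xy; rewrite /ramp ge_max !le_max lexx !orbT lerD2r xy. Qed.

Lemma integrable_ramp (a : R) : 0 <= a ->
  mu.-integrable `]0, 1[ (EFin \o ramp a).
Proof.
move=> a_ge0; apply: (bounded_integrable_itv0 (M := 1)).
  exact: nondecreasing_measurable (ramp_nd a).
move=> t /andP[_ t_lt1]; rewrite ger0_norm ?ramp_ge0 //.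
by rewrite /ramp ge_max ler01 andbT; lra.
Qed.

Lemma Rintegral_ramp_gt0 (a : R) : 0 < a < 1 -> 0 < Rintegral mu `]0, 1[ (ramp a).
Proof.
move=> /andP[a_gt0 a_lt1]; set h := (1 - a) / 2.
have h_le : Rintegral mu `]0, 1[ (fun x => h * heaviside (a + h) x) <=
            Rintegral mu `]0, 1[ (ramp a).
  apply: le_Rintegral => //.
  - exact: integrableZl (integrable_heaviside _ _).
  - by apply: integrable_ramp; lra.
  move=> x _; have [xm|xm] := leP (a + h) x; last first.
    by rewrite heaviside_lt // mulr0 ramp_ge0.
  rewrite heaviside_ge // mulr1 le_max (_ : h <= x - a) //.
  by rewrite /h in xm *; lra.
apply: lt_le_trans h_le; rewrite RintegralZl //; last exact: integrable_heaviside.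
rewrite Rintegral_heaviside; last by rewrite /h; lra.
rewrite /ramp (_ : 1 - (a + h) = h); last by rewrite /h; lra.
by rewrite max_l ?mulr_gt0 //; rewrite /h; lra.
Qed.

End heaviside_ramp.

Lemma betastar_weak_deriv (R : realType) : weak_deriv01 (@betastar R) (fun=> 1 / 2).
Proof.
split; first exact: integrable_cst_itv0.
move=> x /andP[x_ge0 _]; rewrite Rintegral_cst_itv0 // /betastar; lra.
Qed.

Section kinked_bid.
Variables (R : realType) (c a : R).
Local Notation mu := (@lebesgue_measure R).

Definition kink (x : R) : R := x / 2 - c * ramp a x.

Definition kink' (x : R) : R := 1 / 2 - c * heaviside a x.

Lemma kink_sub_betastar (x : R) : kink x - betastar x = - (c * ramp a x).
Proof. by rewrite /kink /betastar; lra. Qed.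

Lemma kink0 : 0 < a -> kink 0 = 0.
Proof. by move=> a_gt0; rewrite /kink rampE leNgt a_gt0 mulr0; lra. Qed.

Lemma kink_weak_deriv : 0 < a -> weak_deriv01 kink kink'.
Proof.
move=> a_gt0; split.
  apply: (bounded_integrable_itv0 (M := 1 / 2 + `|c|)).
    apply: measurable_funB; first exact: measurable_cst.
    apply: measurable_funM; first exact: measurable_cst.
    exact: nondecreasing_measurable (heaviside_nd a).
  move=> t _; case/andP: (heaviside01 a t) => h0 h1.
  have := ler_norm c; have := ler_norm (- c); rewrite normrN /kink' ler_norml.
  nra.
move=> x /andP[x_ge0 _]; rewrite kink0 // add0r /kink' RintegralB //; first last.
- exact: integrableZl (integrable_heaviside _ _).
- exact: integrable_cst_itv0.
rewrite Rintegral_cst_itv0 // RintegralZl ?Rintegral_heaviside //; last first.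
  exact: integrable_heaviside.
by rewrite /kink; lra.
Qed.

Lemma kink_nd : 0 <= c <= 1 / 2 -> nondecreasing_fun kink.
Proof.
move=> /andP[c_ge0 c_le] x y xy; rewrite /kink !rampE.
have c_half : 0 <= 1 / 2 - c by lra.
case: (leP a x) => ax; case: (leP a y) => ay; try lra.
  have yx : 0 <= y - x by lra.
  by have := mulr_ge0 c_half yx; lra.
have ya : 0 <= y - a by lra.
by have := mulr_ge0 c_half ya; lra.
Qed.

Lemma kink_bounds (x : R) : 0 < a -> 0 <= c <= 1 / 2 -> 0 <= x ->
  0 <= kink x <= x / 2.
Proof.
move=> a_gt0 /andP[c_ge0 c_le] x_ge0; rewrite /kink rampE; apply/andP.
case: (leP a x) => ax; last by split; lra.
have xa : 0 <= x - a by lra.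
have c_half : 0 <= 1 / 2 - c by lra.
have := mulr_ge0 c_ge0 xa; have := mulr_ge0 c_half xa.
by move=> ? ?; split; lra.
Qed.

Lemma kink_Bdelta (delta : R) : 0 < a -> 0 <= c <= 1 / 2 -> delta <= 1 / 2 - c ->
  Bdelta delta kink.
Proof.
move=> a_gt0 c_bounds delta_le; exists kink'.
split; first exact: kink_weak_deriv.
split.
  apply: aeW => x; rewrite in_itv /= => /andP[x_gt0 x_lt1].
  by have /andP[k0 k1] := kink_bounds a_gt0 c_bounds (ltW x_gt0); rewrite k0 /=; lra.
split; last exact: kink0.
by apply: aeW => x _; rewrite /kink'; case/andP: (heaviside01 a x) => h0 h1; nra.
Qed.

Lemma kink_Vball (eps : R) : 0 < a < 1 -> 0 <= c <= 1 / 2 -> 1 - a < eps ->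
  Vball (@betastar R) eps kink.
Proof.
move=> /andP[a_gt0 a_lt1] /andP[c_ge0 c_le] a_eps; exists kink', (fun=> 1 / 2).
split; first exact: kink_weak_deriv.
split; first exact: betastar_weak_deriv.
have dist_bid : Rintegral mu `]0, 1[ (fun x => `|kink x - betastar x|) =
                c * Rintegral mu `]0, 1[ (ramp a).
  rewrite -RintegralZl //; last exact/integrable_ramp/ltW.
  apply: eq_Rintegral => x _.
  by rewrite kink_sub_betastar normrN ger0_norm // mulr_ge0 // ramp_ge0.
have dist_deriv : Rintegral mu `]0, 1[ (fun x => `|kink' x - 1 / 2|) = c * (1 - a).
  transitivity (Rintegral mu `]0, 1[ (fun x => c * heaviside a x)).
    apply: eq_Rintegral => x _; rewrite /kink' (_ : _ - _ - _ = - (c * heaviside a x)).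
      case/andP: (heaviside01 a x) => h0 _.
      by rewrite normrN ger0_norm // mulr_ge0.
    by lra.
  rewrite RintegralZl ?Rintegral_heaviside ?rampE ?(ltW a_lt1) //.
  exact: integrable_heaviside.
have ramp_int_le : Rintegral mu `]0, 1[ (ramp a) <= Rintegral mu `]0, 1[ (fun=> 1 - a).
  apply: le_Rintegral => //; [exact/integrable_ramp/ltW | exact: integrable_cst_itv0 |].
  by move=> x /andP[_ x_lt1]; apply: ramp_le; apply: ltW.
rewrite Rintegral_cst_itv0 // mulr1 in ramp_int_le.
by rewrite dist_bid dist_deriv; nra.
Qed.

End kinked_bid.

Section winning_probability.
Variable R : realType.
Local Notation mu := (@lebesgue_measure R).

Definition win_prob (tb : R -> R) (v : R) : R :=
  Rintegral mu `]0, 1[ (fun y => \1_[set y' | tb y' < v] y).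

Lemma U_win_prob (b tb : R -> R) :
  U b tb = Rintegral mu `]0, 1[ (fun x => (x - b x) * win_prob tb (b x)).
Proof. by []. Qed.

Lemma win_prob_ge0 (tb : R -> R) (v : R) : 0 <= win_prob tb v.
Proof. by apply: Rintegral_ge0 => y _; rewrite indicE; case: (_ \in _). Qed.

Lemma win_prob_eq1 (tb : R -> R) (v : R) :
  (forall y, 0 < y < 1 -> tb y < v) -> win_prob tb v = 1.
Proof.
move=> tb_lt; rewrite /win_prob (@eq_Rintegral _ _ _ _ _ (fun=> 1)).
  by rewrite Rintegral_cst_itv0 // mulr1.
by move=> y; rewrite inE /= in_itv /= => /tb_lt tb_y; rewrite indicE mem_set.
Qed.

Variable tb : R -> R.
Hypothesis tb_nd : nondecreasing_fun tb.

Lemma integrable_win_indicator (v : R) :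
  mu.-integrable `]0, 1[ (EFin \o fun y => \1_[set y' | tb y' < v] y : R).
Proof.
apply: (bounded_integrable_itv0 (M := 1)).
  apply: nonincreasing_measurable => // y1 y2 y12; rewrite !indicE.
  case: (boolP (y2 \in _)) => [|_]; last by case: (_ \in _).
  by rewrite inE /= => tb2; rewrite mem_set //= (le_lt_trans (tb_nd y12)).
by move=> y _; rewrite indicE; case: (_ \in _); rewrite ?normr1 ?normr0.
Qed.

Lemma win_prob_le1 (v : R) : win_prob tb v <= 1.
Proof.
rewrite -[X in _ <= X](mulr1 1) -Rintegral_cst_itv0 //.
apply: le_Rintegral => //; [exact: integrable_win_indicator | exact: integrable_cst_itv0].
Qed.

Lemma win_prob_nd : nondecreasing_fun (win_prob tb).
Proof.
move=> v w vw; apply: le_Rintegral => //; try exact: integrable_win_indicator.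
move=> y _; rewrite !indicE; case: (boolP (y \in _)) => [|_]; last by case: (_ \in _).
by rewrite inE /= => tb_v; rewrite mem_set //= (lt_le_trans tb_v).
Qed.

Lemma integrable_U_integrand (b : R -> R) : nondecreasing_fun b ->
  (forall x, 0 < x < 1 -> 0 <= b x <= x) ->
  mu.-integrable `]0, 1[ (EFin \o fun x => (x - b x) * win_prob tb (b x)).
Proof.
move=> b_nd b_bounds; apply: (bounded_integrable_itv0 (M := 1)).
  apply: measurable_funM.
    apply: measurable_funB; first exact: measurable_id.
    exact: nondecreasing_measurable b_nd.
  by apply: nondecreasing_measurable => // x y xy; apply/win_prob_nd/b_nd.
move=> x x01; have /andP[b_ge0 b_le] := b_bounds x x01.
rewrite normrM !ger0_norm ?subr_ge0 ?win_prob_ge0 //.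
by apply: mulr_ile1; rewrite ?subr_ge0 ?win_prob_ge0 ?win_prob_le1 //; lra.
Qed.

End winning_probability.

Section directional_derivative.
Variable R : realType.
Local Notation mu := (@lebesgue_measure R).

Lemma U_sure_win_perturbation (b tb d : R -> R) (e : R) :
  mu.-integrable `]0, 1[ (EFin \o fun x => (x - b x) * win_prob tb (b x)) ->
  mu.-integrable `]0, 1[ (EFin \o d) ->
  (forall x, 0 < x < 1 -> d x != 0 ->
     win_prob tb (b x) = 1 /\ win_prob tb (b x + e * d x) = 1) ->
  U (fun x => b x + e * d x) tb = U b tb - e * Rintegral mu `]0, 1[ d.
Proof.
move=> int_U int_d sure_win; rewrite !U_win_prob /= -RintegralZl //.
rewrite -RintegralB //; last exact: integrableZl int_d.
apply: eq_Rintegral => x; rewrite inE /= in_itv /= => x01.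
have [->|dx_neq0] := eqVneq (d x) 0; first by rewrite !(mulr0, addr0, subr0).
by have [-> ->] := sure_win x x01 dx_neq0; rewrite !mulr1; lra.
Qed.

Lemma DU_is_affine (b tb d : R -> R) (L : R) :
  (\forall e \near (0 : R)^', U (fun x => b x + e * d x) tb = U b tb + e * L) ->
  DU_is b tb d L.
Proof.
move=> U_affine; apply: cvg_near_cst; near=> e.
have e_neq0 : e != 0 by near: e; exact: nbhs_dnbhs_neq.
by rewrite (near U_affine e) // addrC addKr mulrC mulKf.
Unshelve. all: by end_near.
Qed.

End directional_derivative.

Section kinked_deviation.
Variables (R : realType) (c k : R).
Local Notation mu := (@lebesgue_measure R).
Local Notation bid := (kink c (1 - k / 2)).
Local Notation rival := (kink c (1 - k)).

Lemma rival_le_top (y : R) : 0 <= c <= 1 / 2 -> 0 < k < 1 -> y <= 1 ->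
  rival y <= 1 / 2 - c * k.
Proof.
move=> c_bounds /andP[k_gt0 k_lt1] y_le1.
apply: le_trans (kink_nd (1 - k) c_bounds y_le1) _.
by rewrite /kink rampE ifT; lra.
Qed.

Lemma deviation_outbids_rival (x e : R) : 1 / 4 < c -> 0 < k ->
  1 - k / 2 < x < 1 -> e < 1 -> 1 / 2 - c * k < bid x + e * (bid x - betastar x).
Proof.
move=> c_gt k_gt0 /andP[x_gt x_lt1] e_lt1.
rewrite kink_sub_betastar /kink rampE ifT; last by lra.
(* With t := x - (1 - k/2), the margin over 1/2 - c k is
   (c - 1/4)(k - 2t) + (1 - e) c t. *)
have h1 : 0 < (c - 1 / 4) * (k - 2 * (x - (1 - k / 2))) by apply: mulr_gt0; lra.
have h2 : 0 < (1 - e) * c * (x - (1 - k / 2)).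
  by apply: mulr_gt0; [apply: mulr_gt0 |]; lra.
by lra.
Qed.

Lemma win_prob_deviation (x e : R) : 1 / 4 < c <= 1 / 2 -> 0 < k < 1 ->
  1 - k / 2 < x < 1 -> e < 1 ->
  win_prob rival (bid x + e * (bid x - betastar x)) = 1.
Proof.
move=> /andP[c_gt c_le] k01 x_bounds e_lt1.
have c_bounds : 0 <= c <= 1 / 2 by apply/andP; split; lra.
apply: win_prob_eq1 => y /andP[_ y_lt1].
apply: le_lt_trans (rival_le_top c_bounds k01 (ltW y_lt1)) _.
by apply: deviation_outbids_rival => //; case/andP: k01.
Qed.

Lemma U_kink_deviation (e : R) : 1 / 4 < c <= 1 / 2 -> 0 < k < 1 -> e < 1 ->
  U (fun x => bid x + e * (bid x - betastar x)) rival =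
  U bid rival + e * (c * Rintegral mu `]0, 1[ (ramp (1 - k / 2))).
Proof.
move=> c_range k01 e_lt1; have /andP[c_gt c_le] := c_range.
have /andP[k_gt0 k_lt1] := k01.
have c_bounds : 0 <= c <= 1 / 2 by apply/andP; split; lra.
have int_ramp : mu.-integrable `]0, 1[ (EFin \o ramp (1 - k / 2)).
  by apply: integrable_ramp; lra.
have int_dev : mu.-integrable `]0, 1[ (EFin \o fun x => bid x - betastar x).
  apply: (eq_integrable _ _ _ _ (integrableZl _ (- c) int_ramp)) => // x _.
  by rewrite -EFinM /= kink_sub_betastar mulNr.
rewrite (U_sure_win_perturbation _ int_dev).
- have dev_int : Rintegral mu `]0, 1[ (fun x => bid x - betastar x) =
                 - c * Rintegral mu `]0, 1[ (ramp (1 - k / 2)).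
    rewrite -RintegralZl //; apply: eq_Rintegral => x _.
    by rewrite kink_sub_betastar mulNr.
  by rewrite dev_int mulNr mulrN opprK.
- apply: integrable_U_integrand; [exact: kink_nd | exact: kink_nd |].
  move=> x /andP[x_gt0 _]; have kink_gt0 : 0 < 1 - k / 2 by lra.
  have /andP[bid_ge0 bid_le] := kink_bounds kink_gt0 c_bounds (ltW x_gt0).
  by rewrite bid_ge0 /=; lra.
move=> x /andP[x_gt0 x_lt1] dev_neq0; have x_bounds : 1 - k / 2 < x < 1.
  rewrite x_lt1 andbT ltNge; apply: contra dev_neq0 => x_le.
  by rewrite kink_sub_betastar /ramp max_r ?mulr0 ?oppr0 // subr_le0.
split; last exact: win_prob_deviation.
by have := win_prob_deviation c_range k01 x_bounds ltr01; rewrite mul0r addr0.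
Qed.

Lemma DU_pos_kink : 1 / 4 < c <= 1 / 2 -> 0 < k < 1 ->
  DU_pos bid rival (fun x => bid x - betastar x).
Proof.
move=> c_bounds k01; have /andP[c_gt _] := c_bounds; have /andP[k_gt0 k_lt1] := k01.
exists (c * Rintegral mu `]0, 1[ (ramp (1 - k / 2))); split.
  by apply: mulr_gt0; [lra | apply: Rintegral_ramp_gt0; apply/andP; split; lra].
apply: DU_is_affine; near=> e; apply: U_kink_deviation => //.
by near: e; apply: filterS (dnbhs0_lt ltr01) => e /(le_lt_trans (ler_norm e)).
Unshelve. all: by end_near.
Qed.

End kinked_deviation.

Theorem lemma4 (R : realType) (delta : R) (hd0 : 0 < delta) (hd1 : delta <= 1 / 5) :
  (exists b tb : R -> R, Bdelta delta b /\ Bdelta delta tb /\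
     DU_pos b tb (fun x => b x - @betastar R x)) /\
  (forall eps : R, 0 < eps ->
     exists b tb : R -> R,
       Bdelta delta b /\ Bdelta delta tb /\
       Vball (@betastar R) eps b /\ Vball (@betastar R) eps tb /\
       DU_pos b tb (fun x => b x - @betastar R x)).
Proof.
pose c := 1 / 2 - delta.
have c_bounds : 1 / 4 < c <= 1 / 2 by rewrite /c; apply/andP; split; lra.
have c01 : 0 <= c <= 1 / 2 by rewrite /c; apply/andP; split; lra.
have delta_c : delta <= 1 / 2 - c by rewrite /c; lra.
have near_betastar (eps : R) : 0 < eps -> exists b tb : R -> R,
    Bdelta delta b /\ Bdelta delta tb /\
    Vball (@betastar R) eps b /\ Vball (@betastar R) eps tb /\
    DU_pos b tb (fun x => b x - @betastar R x).
  move=> eps_gt0; pose k := Num.min (1 / 2) (eps / 2).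
  have k_gt0 : 0 < k by rewrite lt_min; apply/andP; split; lra.
  have k_le_half : k <= 1 / 2 by rewrite ge_min lexx.
  have k_le_eps : k <= eps / 2 by rewrite ge_min lexx orbT.
  have k01 : 0 < k < 1 by rewrite k_gt0 /=; lra.
  exists (kink c (1 - k / 2)), (kink c (1 - k)).
  split; first by apply: kink_Bdelta => //; lra.
  split; first by apply: kink_Bdelta => //; lra.
  split; first by apply: kink_Vball => //; [apply/andP; split | ]; lra.
  split; first by apply: kink_Vball => //; [apply/andP; split | ]; lra.
  exact: DU_pos_kink.
split; last exact: near_betastar.
by have [b [tb [? [? [_ [_ ?]]]]]] := near_betastar 1 ltr01; exists b, tb.
Qed.
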